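(* Let $h:\mathbb{R}\to(0,\infty)$ be continuously differentiable and monotone, with $h(x)\to k_{-\infty}$ as $x\to-\infty$ and $h(x)\to k_{+\infty}$ as $x\to+\infty$. Then $$T\ \ge\ \mathrm{sech}^2\left\{\frac12\left|\ln\frac{k_{+\infty}}{k_{-\infty}}\right|+\frac12\int_{-\infty}^{\infty}\frac{|k^2-h^2|}{h}\,\mathrm{d}x\right\}.$$
   Context: Standing setup: $k^2:\mathbb{R}\to\mathbb{R}$ is a piecewise continuous function (it may be negative somewhere) with $k^2(x)\to k_{\pm\infty}^2$ as $x\to\pm\infty$, where $k_{\pm\infty}>0$ and $k^2-k_{\pm\infty}^2$ is integrable near $\pm\infty$. For the equation $u''+k^2(x)u=0$ there is a solution with $u(x)=e^{ik_{-\infty}x}+r\,e^{-ik_{-\infty}x}+o(1)$ as $x\to-\infty$ and $u(x)=\tau\,e^{ik_{+\infty}x}+o(1)$ as $x\to+\infty$; the transmission probability is $T=(k_{+\infty}/k_{-\infty})|\tau|^2$. Here $\mathrm{sech}=1/\cosh$, and if the integral equals $+\infty$ the bound is read as the trivial statement $T\ge 0$. *)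

From Stdlib Require Import Reals Lra List.
Open Scope R_scope.

Definition lim_pinf (f : R -> R) (l : R) : Prop :=
  forall eps, 0 < eps -> exists M, forall x, M <= x -> Rabs (f x - l) < eps.
Definition lim_minf (f : R -> R) (l : R) : Prop :=
  forall eps, 0 < eps -> exists M, forall x, x <= M -> Rabs (f x - l) < eps.

Definition left_lim (f : R -> R) (x l : R) : Prop :=
  forall eps, 0 < eps -> exists d, 0 < d /\
    forall y, x - d < y < x -> Rabs (f y - l) < eps.
Definition right_lim (f : R -> R) (x l : R) : Prop :=
  forall eps, 0 < eps -> exists d, 0 < d /\
    forall y, x < y < x + d -> Rabs (f y - l) < eps.

Definition piecewise_continuous (f : R -> R) : Prop :=
  (forall x, exists lL lR, left_lim f x lL /\ right_lim f x lR) /\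
  (forall a b, exists D : list R,
     forall x, a <= x <= b -> ~ In x D -> continuity_pt f x).

Definition has_integral (f : R -> R) (a b v : R) : Prop :=
  exists pr : Riemann_integrable f a b, RiemannInt pr = v.

Definition integrable_near_pinf (f : R -> R) : Prop :=
  exists a M, forall b, a <= b ->
    exists v, has_integral (fun x => Rabs (f x)) a b v /\ v <= M.
Definition integrable_near_minf (f : R -> R) : Prop :=
  exists b M, forall a, a <= b ->
    exists v, has_integral (fun x => Rabs (f x)) a b v /\ v <= M.

Definition improper_integral_R (f : R -> R) (I : R) : Prop :=
  (forall a b, a <= b -> exists v, has_integral f a b v) /\
  (forall eps, 0 < eps -> exists M, forall a b, a <= - M -> M <= b ->
     exists v, has_integral f a b v /\ Rabs (v - I) < eps).

Definition is_solution (k2 u : R -> R) : Prop :=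
  exists du : R -> R,
    (forall x, derivable_pt_lim u x (du x)) /\
    (forall x, continuity_pt du x) /\
    (forall x, continuity_pt k2 x -> derivable_pt_lim du x (- (k2 x * u x))).

Definition is_C1 (h : R -> R) : Prop :=
  exists dh : R -> R,
    (forall x, derivable_pt_lim h x (dh x)) /\ (forall x, continuity_pt dh x).

Definition monotone (h : R -> R) : Prop :=
  (forall x y, x <= y -> h x <= h y) \/ (forall x y, x <= y -> h y <= h x).

Definition sech (x : R) : R := 1 / cosh x.

Definition Cx := (R * R)%type.
Definition Cadd (z w : Cx) : Cx := (fst z + fst w, snd z + snd w).
Definition Cmul (z w : Cx) : Cx :=
  (fst z * fst w - snd z * snd w, fst z * snd w + snd z * fst w).
Definition Cexpi (t : R) : Cx := (cos t, sin t).
Definition Cnorm2 (z : Cx) : R := fst z ^ 2 + snd z ^ 2.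

Definition Clim0_pinf (f : R -> Cx) : Prop :=
  lim_pinf (fun x => fst (f x)) 0 /\ lim_pinf (fun x => snd (f x)) 0.
Definition Clim0_minf (f : R -> Cx) : Prop :=
  lim_minf (fun x => fst (f x)) 0 /\ lim_minf (fun x => snd (f x)) 0.

(* Write u = p + i q.  The energy E = h |u|^2 + |u'|^2 / h and the
   (constant) Wronskian W = p q' - q p' satisfy E^2 - 4 W^2 = X^2 + Y^2 with
   X = h |u|^2 - |u'|^2 / h and Y = (|u|^2)', while
   E' = (h'/h) X + ((h^2 - k2)/h) Y.  Hence the potential
   P = Psi (E) + sg ln h, where Psi is a primitive of 1/sqrt(E^2 - 4W^2 + d)
   (d > 0 a regularisation) and sg the sign of h', satisfies
   P' >= - |k2 - h^2| / h.  Integrating over the line and computing the end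
   values E(-oo) = 2 km (1 + |r|^2), E(+oo) = 2 W = 2 kp |tau|^2 gives the
   bound after letting d -> 0. *)
From Stdlib Require Import Reals Lra Lia List RList.
Open Scope R_scope.

Lemma Rabs_le_between x y : Rabs x <= y -> - y <= x <= y.
Proof. unfold Rabs; destruct (Rcase_abs x); lra. Qed.

Lemma increment_le_of_deriv_le (K dK : R -> R) (c x y : R) :
  x <= y -> (forall t, x <= t <= y -> continuity_pt K t) ->
  (forall t, x < t < y -> derivable_pt_lim K t (dK t) /\ dK t <= c) ->
  K y - K x <= c * (y - x).
Proof.
  intros Hxy Hc Hd.
  destruct (Req_dec x y) as [<-|Hne]; [lra|].
  assert (Hlt : x < y) by lra.
  pose (prK := fun t (P : x < t < y) =>
    exist (fun l => derivable_pt_abs K t l) (dK t) (proj1 (Hd t P))).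
  pose (prid := fun t (_ : x < t < y) => derivable_pt_id t).
  destruct (MVT K id x y prK prid Hlt Hc
              (fun t _ => derivable_continuous_pt _ _ (derivable_pt_id t)))
    as [t [P HP]].
  change (derive_pt K t (prK t P)) with (dK t) in HP.
  replace (derive_pt id t (prid t P)) with 1 in HP
    by (symmetry; apply derive_pt_eq_0, derivable_pt_lim_id).
  unfold id in HP.
  destruct (Hd t P) as [_ Hle].
  replace (K y - K x) with (dK t * (y - x)) by lra.
  apply Rmult_le_compat_r; lra.
Qed.

(* The mean value inequality survives finitely many exceptional points D,
   by splitting [x, y] at each of them (continuity is still required). *)
Lemma increment_le_of_deriv_le_except (K dK : R -> R) (c : R) (D : list R) :
  forall x y, x <= y -> (forall t, x <= t <= y -> continuity_pt K t) ->
  (forall t, x < t < y -> ~ In t D -> derivable_pt_lim K t (dK t) /\ dK t <= c) ->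
  K y - K x <= c * (y - x).
Proof.
  induction D as [|d D IH]; intros x y Hxy Hc Hd.
  - apply (increment_le_of_deriv_le K dK); auto.
  - assert (Hd' : forall x' y', x <= x' -> y' <= y ->
              forall t, x' < t < y' -> t <> d -> ~ In t D ->
              derivable_pt_lim K t (dK t) /\ dK t <= c).
    { intros x' y' H1 H2 t Ht Htd HtD. apply Hd; [lra|].
      intros [E|E]; [congruence|tauto]. }
    destruct (Rlt_dec x d) as [H1|H1]; [destruct (Rlt_dec d y) as [H2|H2]|].
    + assert (Hl : K d - K x <= c * (d - x)).
      { apply IH; [lra| intros; apply Hc; lra|].
        intros t Ht HtD. apply (Hd' x d); auto; lra. }
      assert (Hr : K y - K d <= c * (y - d)).
      { apply IH; [lra| intros; apply Hc; lra|].
        intros t Ht HtD. apply (Hd' d y); auto; lra. }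
      lra.
    + apply IH; auto. intros t Ht HtD. apply (Hd' x y); auto; lra.
    + apply IH; auto. intros t Ht HtD. apply (Hd' x y); auto; lra.
Qed.

Lemma lipschitz_of_deriv_bound (f df : R -> R) (D : list R) (B x y : R) :
  x <= y -> (forall t, x <= t <= y -> continuity_pt f t) ->
  (forall t, x < t < y -> ~ In t D ->
     derivable_pt_lim f t (df t) /\ Rabs (df t) <= B) ->
  Rabs (f y - f x) <= B * (y - x).
Proof.
  intros Hxy Hc Hd. apply Rabs_le. split.
  - assert (H : - f y - - f x <= B * (y - x)).
    { apply (increment_le_of_deriv_le_except (fun t => - f t) (fun t => - df t) B D);
        auto.
      - intros t Ht. apply continuity_pt_opp; auto.
      - intros t Ht HtD. destruct (Hd t Ht HtD) as [Hder Hb].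
        apply Rabs_le_between in Hb.
        split; [apply derivable_pt_lim_opp; auto | lra]. }
    lra.
  - apply (increment_le_of_deriv_le_except f df B D); auto.
    intros t Ht HtD. destruct (Hd t Ht HtD) as [Hder Hb].
    apply Rabs_le_between in Hb. split; [auto | lra].
Qed.

Lemma derivable_pt_lim_eq f x l l' :
  derivable_pt_lim f x l -> l = l' -> derivable_pt_lim f x l'.
Proof. intros H <-. exact H. Qed.

Lemma derivable_pt_lim_sq f t l :
  derivable_pt_lim f t l -> derivable_pt_lim (fun x => f x ^ 2) t (2 * f t * l).
Proof.
  intros H. apply derivable_pt_lim_eq with (INR 2 * f t ^ Nat.pred 2 * l).
  - apply (derivable_pt_lim_comp f (fun y => y ^ 2)); auto.
    apply derivable_pt_lim_pow.
  - simpl. ring.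
Qed.

(* The increment of K over [a, b] is bounded by the integral of any step
   function f (given by an adapted subdivision l and values lf) that
   dominates K' off finitely many points: apply the mean value inequality
   on each step. *)
Lemma increment_le_stepfun (K dK f : R -> R) (D : list R) :
  forall l lf a b, adapted_couple f a b l lf -> a <= b ->
  (forall t, a <= t <= b -> continuity_pt K t) ->
  (forall t, a < t < b -> ~ In t D -> derivable_pt_lim K t (dK t) /\ dK t <= f t) ->
  K b - K a <= Int_SF lf l.
Proof.
  induction l as [|x l IH]; intros lf a b Had Hab Hc Hd.
  - destruct Had as [_ [_ [_ [E _]]]]. discriminate.
  - destruct l as [|y l].
    + destruct Had as [_ [E1 [E2 _]]]. simpl in E1, E2.
      rewrite Rmin_left in E1 by lra. rewrite Rmax_right in E2 by lra.
      destruct lf; simpl; replace b with a by lra; lra.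
    + destruct lf as [|v lf].
      { destruct Had as [_ [_ [_ [E _]]]]. discriminate. }
      assert (Had' := StepFun_P7 Hab Had).
      destruct Had as [Hord [E1 [E2 [_ Hcst]]]].
      simpl in E1. rewrite Rmin_left in E1 by lra. subst x.
      assert (Hay : a <= y) by (apply (Hord 0%nat); simpl; lia).
      assert (Hyb : y <= b).
      { assert (HH := RList_P7 _ y Hord (or_intror (or_introl eq_refl))).
        rewrite E2, Rmax_right in HH; lra. }
      assert (Hfirst : K y - K a <= v * (y - a)).
      { apply (increment_le_of_deriv_le_except K dK v D); auto.
        - intros; apply Hc; lra.
        - intros t Ht HtD. destruct (Hd t ltac:(lra) HtD) as [Hder Hle].
          pose proof (Hcst 0%nat ltac:(simpl; lia) t Ht) as Hv. simpl in Hv.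
          rewrite Hv in Hle. auto. }
      assert (Hrest : K b - K y <= Int_SF lf (y :: l)).
      { apply IH; auto; intros; [apply Hc | apply Hd]; auto; lra. }
      simpl in *. lra.
Qed.

(* Each approximating step function phi_n
   satisfies g <= phi_n + psi_n with \int |psi_n| -> 0. *)
Lemma increment_le_RiemannInt (K dK g : R -> R) (D : list R) (a b : R)
  (pr : Riemann_integrable g a b) :
  a <= b -> (forall t, a <= t <= b -> continuity_pt K t) ->
  (forall t, a < t < b -> ~ In t D -> derivable_pt_lim K t (dK t) /\ dK t <= g t) ->
  K b - K a <= RiemannInt pr.
Proof.
  intros Hab Hc Hd.
  unfold RiemannInt. destruct (RiemannInt_exists pr RinvN RinvN_cv) as [l Hl].
  assert (Hn : forall n, K b - K a <=
     RiemannInt_SF (phi_sequence RinvN pr n) + RinvN n).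
  { intro n. destruct (phi_sequence_prop RinvN pr n) as [psi [Hpsi Hint]].
    set (phi := phi_sequence RinvN pr n) in *.
    set (s := mkStepFun (StepFun_P28 1 phi psi)).
    assert (Hs : RiemannInt_SF s = RiemannInt_SF phi + 1 * RiemannInt_SF psi)
      by apply StepFun_P30.
    assert (Hle : K b - K a <= RiemannInt_SF s).
    { unfold RiemannInt_SF. destruct (Rle_dec a b) as [_|]; [|lra].
      apply (increment_le_stepfun K dK s D _ _ a b (StepFun_P1 s) Hab Hc).
      intros t Ht HtD. destruct (Hd t Ht HtD) as [Hder Hle]. split; auto.
      assert (Hmm : Rmin a b <= t <= Rmax a b)
        by (rewrite Rmin_left, Rmax_right; lra).
      specialize (Hpsi t Hmm). apply Rabs_le_between in Hpsi. simpl. lra. }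
    apply Rabs_def2 in Hint. simpl in *. lra. }
  apply (@Rle_cv_lim (fun _ => K b - K a)
           (fun n => RiemannInt_SF (phi_sequence RinvN pr n) + RinvN n)).
  - exact Hn.
  - intros eps He. exists 0%nat. intros. unfold Rdist.
    rewrite Rminus_diag, Rabs_R0. auto.
  - replace l with (l + 0) by ring. apply CV_plus; auto. apply RinvN_cv.
Qed.

(* Behaviour at either end of the line, handled uniformly by a direction
   s = 1 (towards +oo) or s = -1 (towards -oo). *)
Definition eventually (s : R) (P : R -> Prop) : Prop :=
  exists M, forall x, M <= s * x -> P x.

Definition tends0 (s : R) (f : R -> R) : Prop :=
  forall eps, 0 < eps -> eventually s (fun x => Rabs (f x) < eps).

Definition ev_bounded (s : R) (f : R -> R) : Prop :=
  exists B, eventually s (fun x => Rabs (f x) <= B).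

Lemma eventually_and s P Q :
  eventually s P -> eventually s Q -> eventually s (fun x => P x /\ Q x).
Proof.
  intros [M1 H1] [M2 H2]. exists (Rmax M1 M2). intros x Hx.
  pose proof (Rmax_l M1 M2). pose proof (Rmax_r M1 M2).
  split; [apply H1 | apply H2]; lra.
Qed.

Lemma eventually_mono s (P Q : R -> Prop) :
  (forall x, P x -> Q x) -> eventually s P -> eventually s Q.
Proof. intros H [M HM]. exists M. auto. Qed.

Lemma tends0_ext s f g : (forall x, f x = g x) -> tends0 s f -> tends0 s g.
Proof.
  intros E Hf eps He. apply (eventually_mono s (fun x => Rabs (f x) < eps)); auto.
  intros x. rewrite E. auto.
Qed.

Lemma tends0_plus s f g :
  tends0 s f -> tends0 s g -> tends0 s (fun x => f x + g x).
Proof.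
  intros Hf Hg eps He.
  apply (eventually_mono s (fun x => Rabs (f x) < eps / 2 /\ Rabs (g x) < eps / 2)).
  - intros x [A B]. apply Rle_lt_trans with (1 := Rabs_triang _ _). lra.
  - apply eventually_and; [apply Hf | apply Hg]; lra.
Qed.

Lemma tends0_opp s f : tends0 s f -> tends0 s (fun x => - f x).
Proof.
  intros Hf eps He. apply (eventually_mono s (fun x => Rabs (f x) < eps)); auto.
  intros x. rewrite Rabs_Ropp. auto.
Qed.

Lemma tends0_minus s f g :
  tends0 s f -> tends0 s g -> tends0 s (fun x => f x - g x).
Proof. intros. apply tends0_plus; auto. apply tends0_opp; auto. Qed.

Lemma tends0_mult s f g :
  tends0 s f -> ev_bounded s g -> tends0 s (fun x => f x * g x).
Proof.
  intros Hf [B HB] eps He.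
  set (B' := Rabs B + 1).
  assert (HB' : 0 < B') by (unfold B'; pose proof (Rabs_pos B); lra).
  apply (eventually_mono s (fun x => Rabs (f x) < eps / B' /\ Rabs (g x) <= B)).
  - intros x [Hfx Hgx]. rewrite Rabs_mult.
    assert (Rabs (g x) <= B') by (unfold B'; pose proof (RRle_abs B); lra).
    apply Rle_lt_trans with (Rabs (f x) * B').
    + apply Rmult_le_compat_l; auto. apply Rabs_pos.
    + replace eps with (eps / B' * B') by (field; lra).
      apply Rmult_lt_compat_r; auto.
  - apply eventually_and; auto. apply Hf. apply Rdiv_lt_0_compat; auto.
Qed.

Lemma tends0_mult_l s f g :
  ev_bounded s g -> tends0 s f -> tends0 s (fun x => g x * f x).
Proof.
  intros. apply tends0_ext with (fun x => f x * g x); [intros; ring|].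
  apply tends0_mult; auto.
Qed.

Lemma ev_bounded_const s c : ev_bounded s (fun _ => c).
Proof. exists (Rabs c). exists 0. intros; lra. Qed.

Lemma ev_bounded_plus s f g :
  ev_bounded s f -> ev_bounded s g -> ev_bounded s (fun x => f x + g x).
Proof.
  intros [B1 H1] [B2 H2]. exists (B1 + B2).
  apply (eventually_mono s (fun x => Rabs (f x) <= B1 /\ Rabs (g x) <= B2)).
  - intros x [A B]. apply Rle_trans with (1 := Rabs_triang _ _). lra.
  - apply eventually_and; auto.
Qed.

Lemma ev_bounded_mult s f g :
  ev_bounded s f -> ev_bounded s g -> ev_bounded s (fun x => f x * g x).
Proof.
  intros [B1 H1] [B2 H2]. exists (B1 * B2).
  apply (eventually_mono s (fun x => Rabs (f x) <= B1 /\ Rabs (g x) <= B2)).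
  - intros x [A B]. rewrite Rabs_mult.
    apply Rmult_le_compat; auto; apply Rabs_pos.
  - apply eventually_and; auto.
Qed.

Lemma ev_bounded_sq s f : ev_bounded s f -> ev_bounded s (fun x => f x ^ 2).
Proof.
  intros [B HB]. exists (B * B).
  apply (eventually_mono s (fun x => Rabs (f x) <= B)); auto.
  intros x Hx. rewrite <- RPow_abs. simpl. rewrite Rmult_1_r.
  apply Rmult_le_compat; auto; apply Rabs_pos.
Qed.

Lemma ev_bounded_approx s f g :
  tends0 s (fun x => f x - g x) -> ev_bounded s g -> ev_bounded s f.
Proof.
  intros Hfg [B HB]. exists (1 + B).
  apply (eventually_mono s (fun x => Rabs (f x - g x) < 1 /\ Rabs (g x) <= B)).
  - intros x [A C]. replace (f x) with ((f x - g x) + g x) by ring.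
    apply Rle_trans with (1 := Rabs_triang _ _). lra.
  - apply eventually_and; auto. apply Hfg. lra.
Qed.

Lemma ev_bounded_inv s f l :
  0 < l -> tends0 s (fun x => f x - l) -> ev_bounded s (fun x => / f x).
Proof.
  intros Hl Hf. exists (2 / l).
  apply (eventually_mono s (fun x => Rabs (f x - l) < l / 2)); [|apply Hf; lra].
  intros x Hx. apply Rabs_def2 in Hx.
  rewrite Rabs_inv, Rabs_pos_eq by lra.
  replace (2 / l) with (/ (l / 2)) by (field; lra).
  apply Rinv_le_contravar; lra.
Qed.

Lemma tends0_comp s (f G : R -> R) l :
  tends0 s (fun x => f x - l) -> continuity_pt G l ->
  tends0 s (fun x => G (f x) - G l).
Proof.
  intros Hf HG eps He.
  destruct (HG eps He) as [alp [Halp Hx]].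
  apply (eventually_mono s (fun x => Rabs (f x - l) < alp)); [|apply Hf; auto].
  intros x Hfx. destruct (Req_dec (f x) l) as [E|E].
  - rewrite E, Rminus_diag, Rabs_R0; auto.
  - apply (Hx (f x)). repeat split; auto.
Qed.

Lemma tends0_const_eq s C l : s = 1 \/ s = -1 -> tends0 s (fun _ => C - l) -> C = l.
Proof.
  intros Hs H. destruct (Req_dec C l) as [E|E]; auto.
  assert (Hp : 0 < Rabs (C - l)) by (apply Rabs_pos_lt; lra).
  destruct (H _ Hp) as [M HM].
  assert (Rabs (C - l) < Rabs (C - l)); [|lra].
  apply (HM (s * M)). destruct Hs as [-> | ->]; lra.
Qed.

Lemma lim_pinf_tends0 f l : lim_pinf f l -> tends0 1 (fun x => f x - l).
Proof.
  intros H eps He. destruct (H eps He) as [M HM]. exists M. intros x Hx.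
  apply HM. lra.
Qed.

Lemma lim_minf_tends0 f l : lim_minf f l -> tends0 (-1) (fun x => f x - l).
Proof.
  intros H eps He. destruct (H eps He) as [M HM]. exists (- M). intros x Hx.
  apply HM. lra.
Qed.

(* On a unit interval, a bound B on f'' controls f' through the increment of
   f: by the mean value theorem f' equals f (a + 1) - f a somewhere in
   [a, a + 1], and f' is B-Lipschitz there. *)
Lemma deriv_le_increment_plus (f df ddf : R -> R) (D : list R) (a x B : R) :
  a <= x <= a + 1 ->
  (forall t, derivable_pt_lim f t (df t)) -> (forall t, continuity_pt df t) ->
  (forall t, a < t < a + 1 -> ~ In t D -> derivable_pt_lim df t (ddf t)) ->
  (forall t, a <= t <= a + 1 -> Rabs (ddf t) <= B) ->
  Rabs (df x) <= Rabs (f (a + 1) - f a) + B.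
Proof.
  intros Hx Hf Hdfc Hdd HB.
  assert (HB0 : 0 <= B) by (apply Rle_trans with (Rabs (ddf a)); [apply Rabs_pos | apply HB; lra]).
  destruct (MVT_cor2 f df a (a + 1) ltac:(lra) (fun c _ => Hf c)) as [c [Hc Hac]].
  replace (f (a + 1) - f a) with (df c) by (rewrite Hc; ring).
  assert (Hlip : forall y z, a <= y <= z -> z <= a + 1 -> Rabs (df z - df y) <= B).
  { intros y z Hyz Hz.
    apply Rle_trans with (B * (z - y)); [|nra].
    apply (lipschitz_of_deriv_bound df ddf D); [lra | auto |].
    intros t Ht HtD. split; [apply Hdd; auto; lra | apply HB; lra]. }
  assert (Hxc : Rabs (df x - df c) <= B).
  { destruct (Rle_dec c x).
    - apply Hlip; lra.
    - rewrite Rabs_minus_sym. apply Hlip; lra. }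
  replace (df x) with (df c + (df x - df c)) by ring.
  apply Rle_trans with (1 := Rabs_triang _ _). lra.
Qed.

(* Landau-type lemma: if f -> 0 and f'' -> 0 at an end of the line, then
   f' -> 0 there as well. *)
Lemma tends0_deriv s (f df ddf : R -> R) :
  s = 1 \/ s = -1 ->
  (forall t, derivable_pt_lim f t (df t)) -> (forall t, continuity_pt df t) ->
  (forall a b, exists D : list R, forall t, a <= t <= b -> ~ In t D ->
     derivable_pt_lim df t (ddf t)) ->
  tends0 s f -> tends0 s ddf -> tends0 s df.
Proof.
  intros Hs Hf Hdfc Hpw Hf0 Hdd0 eps He.
  destruct (Hf0 (eps / 4) ltac:(lra)) as [M1 H1].
  destruct (Hdd0 (eps / 2) ltac:(lra)) as [M2 H2].
  set (M := Rmax M1 M2).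
  assert (HM1 : M1 <= M) by apply Rmax_l. assert (HM2 : M2 <= M) by apply Rmax_r.
  assert (Hwin : forall a x, a <= x <= a + 1 ->
            (forall t, a <= t <= a + 1 -> M <= s * t) -> Rabs (df x) < eps).
  { intros a x Hx Hfar. destruct (Hpw a (a + 1)) as [D HD].
    assert (Hb := deriv_le_increment_plus f df ddf D a x (eps / 2) Hx Hf Hdfc
                    (fun t Ht HtD => HD t ltac:(lra) HtD)
                    (fun t Ht => Rlt_le _ _ (H2 t ltac:(pose proof (Hfar t Ht); lra)))).
    assert (Ha := H1 a ltac:(pose proof (Hfar a ltac:(lra)); lra)).
    assert (Ha1 := H1 (a + 1) ltac:(pose proof (Hfar (a + 1) ltac:(lra)); lra)).
    apply Rabs_def2 in Ha. apply Rabs_def2 in Ha1.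
    assert (Rabs (f (a + 1) - f a) < eps / 2) by (apply Rabs_def1; lra).
    lra. }
  exists M. intros x Hx. destruct Hs as [-> | ->].
  - apply (Hwin x x); [lra | intros; lra].
  - apply (Hwin (x - 1) x); [lra | intros; lra].
Qed.

(* The solutions a cos (K x) + b sin (K x) of the free equation
   u'' + K^2 u = 0; the real and imaginary parts of u approach such
   functions at either end of the line. *)
Definition trig (a b K : R) (x : R) : R := a * cos (K * x) + b * sin (K * x).

Lemma trig_deriv a b K x :
  derivable_pt_lim (trig a b K) x (trig (K * b) (- (K * a)) K x).
Proof.
  unfold trig.
  assert (HK : derivable_pt_lim (fun y => K * y) x K).
  { pose proof (derivable_pt_lim_scal id K x 1 (derivable_pt_lim_id x)) as H.
    rewrite Rmult_1_r in H. exact H. }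
  replace (K * b * cos (K * x) + - (K * a) * sin (K * x)) with
    (a * (- sin (K * x) * K) + b * (cos (K * x) * K)) by ring.
  apply derivable_pt_lim_plus; apply derivable_pt_lim_scal.
  - apply (derivable_pt_lim_comp (fun y => K * y) cos); auto.
    apply derivable_pt_lim_cos.
  - apply (derivable_pt_lim_comp (fun y => K * y) sin); auto.
    apply derivable_pt_lim_sin.
Qed.

Lemma trig_deriv2 a b K x :
  derivable_pt_lim (trig (K * b) (- (K * a)) K) x (- (K ^ 2 * trig a b K x)).
Proof.
  replace (- (K ^ 2 * trig a b K x)) with (trig (K * - (K * a)) (- (K * (K * b))) K x)
    by (unfold trig; ring).
  apply trig_deriv.
Qed.

Lemma trig_bounded a b K x : Rabs (trig a b K x) <= Rabs a + Rabs b.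
Proof.
  unfold trig. apply Rle_trans with (1 := Rabs_triang _ _). rewrite !Rabs_mult.
  assert (Rabs (cos (K * x)) <= 1)
    by (pose proof (COS_bound (K * x)); apply Rabs_le; lra).
  assert (Rabs (sin (K * x)) <= 1)
    by (pose proof (SIN_bound (K * x)); apply Rabs_le; lra).
  pose proof (Rabs_pos a). pose proof (Rabs_pos b).
  pose proof (Rabs_pos (cos (K * x))). pose proof (Rabs_pos (sin (K * x))).
  nra.
Qed.

Lemma ev_bounded_trig s a b K : ev_bounded s (trig a b K).
Proof. exists (Rabs a + Rabs b). exists 0. intros x _. apply trig_bounded. Qed.

(* If p'' = - k2 p (off the discontinuities of k2), k2 -> K^2 and
   p -> trig a b K at an end, then p' approaches the derivative of the model
   there: apply [tends0_deriv] to the difference p - trig a b K. *)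
Lemma deriv_approaches_model s (k2 p dp : R -> R) K a b :
  s = 1 \/ s = -1 -> piecewise_continuous k2 ->
  (forall x, derivable_pt_lim p x (dp x)) -> (forall x, continuity_pt dp x) ->
  (forall x, continuity_pt k2 x -> derivable_pt_lim dp x (- (k2 x * p x))) ->
  tends0 s (fun x => k2 x - K ^ 2) -> tends0 s (fun x => p x - trig a b K x) ->
  tends0 s (fun x => dp x - trig (K * b) (- (K * a)) K x).
Proof.
  intros Hs [_ Hpw] Hp Hdpc Hdp Hk Hpv.
  apply (tends0_deriv s (fun x => p x - trig a b K x) _
           (fun x => - (k2 x * p x) - - (K ^ 2 * trig a b K x))); auto.
  - intros t. apply derivable_pt_lim_minus; auto. apply trig_deriv.
  - intros t. apply continuity_pt_minus; auto.
    apply derivable_continuous_pt. eexists. apply trig_deriv2.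
  - intros a0 b0. destruct (Hpw a0 b0) as [D HD]. exists D. intros t Ht HtD.
    apply derivable_pt_lim_minus; [apply Hdp, HD; auto | apply trig_deriv2].
  -
    apply tends0_ext with (fun x => - ((k2 x - K ^ 2) * p x)
                                    - K ^ 2 * (p x - trig a b K x)).
    { intros; ring. }
    apply tends0_minus.
    + apply tends0_opp, tends0_mult; auto.
      apply (ev_bounded_approx s p (trig a b K)); auto. apply ev_bounded_trig.
    + apply tends0_mult_l; auto. apply ev_bounded_const.
Qed.

(* For a pair of real solutions p, q (u = p + i q) and a positive comparison
   function h, the energy E = h |u|^2 + |u'|^2 / h and the Wronskian
   W = p q' - q p' = Im (conj u * u'). *)
Definition energy (h p q dp dq : R -> R) (x : R) : R :=
  h x * (p x ^ 2 + q x ^ 2) + (dp x ^ 2 + dq x ^ 2) / h x.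
Definition wronskian (p q dp dq : R -> R) (x : R) : R := p x * dq x - q x * dp x.

Lemma cos2_sin2 y : cos y ^ 2 + sin y ^ 2 = 1.
Proof. pose proof (sin2_cos2 y) as H. unfold Rsqr in H. nra. Qed.

Lemma energy_trig a1 b1 a2 b2 K x : 0 < K ->
  energy (fun _ => K) (trig a1 b1 K) (trig a2 b2 K)
    (trig (K * b1) (- (K * a1)) K) (trig (K * b2) (- (K * a2)) K) x
  = K * (a1 ^ 2 + b1 ^ 2 + a2 ^ 2 + b2 ^ 2).
Proof.
  intros HK. unfold energy, trig.
  transitivity (K * (cos (K * x) ^ 2 + sin (K * x) ^ 2) * (a1 ^ 2 + b1 ^ 2 + a2 ^ 2 + b2 ^ 2)).
  - field. lra.
  - rewrite cos2_sin2. ring.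
Qed.

Lemma wronskian_trig a1 b1 a2 b2 K x :
  wronskian (trig a1 b1 K) (trig a2 b2 K)
    (trig (K * b1) (- (K * a1)) K) (trig (K * b2) (- (K * a2)) K) x
  = K * (a1 * b2 - a2 * b1).
Proof.
  unfold wronskian, trig.
  transitivity (K * (cos (K * x) ^ 2 + sin (K * x) ^ 2) * (a1 * b2 - a2 * b1)).
  - ring.
  - rewrite cos2_sin2. ring.
Qed.

Section EndLimits.
Variables (s : R) (h p q dp dq : R -> R) (K a1 b1 a2 b2 : R).
Hypothesis K_pos : 0 < K.
Hypothesis h_pos : forall x, 0 < h x.
Hypothesis h_lim : tends0 s (fun x => h x - K).
Hypothesis p_lim : tends0 s (fun x => p x - trig a1 b1 K x).
Hypothesis q_lim : tends0 s (fun x => q x - trig a2 b2 K x).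
Hypothesis dp_lim : tends0 s (fun x => dp x - trig (K * b1) (- (K * a1)) K x).
Hypothesis dq_lim : tends0 s (fun x => dq x - trig (K * b2) (- (K * a2)) K x).

Let v1 := trig a1 b1 K.
Let v2 := trig a2 b2 K.
Let w1 := trig (K * b1) (- (K * a1)) K.
Let w2 := trig (K * b2) (- (K * a2)) K.

Let bounded_models :
  ev_bounded s v1 /\ ev_bounded s v2 /\ ev_bounded s w1 /\ ev_bounded s w2.
Proof. repeat split; apply ev_bounded_trig. Qed.

Let bounded_solutions :
  ev_bounded s p /\ ev_bounded s q /\ ev_bounded s dp /\ ev_bounded s dq.
Proof.
  destruct bounded_models as [B1 [B2 [B3 B4]]].
  repeat split; eapply ev_bounded_approx; eauto.
Qed.

Lemma energy_limit :
  tends0 s (fun x => energy h p q dp dq x - K * (a1 ^ 2 + b1 ^ 2 + a2 ^ 2 + b2 ^ 2)).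
Proof.
  destruct bounded_models as [Bv1 [Bv2 [Bw1 Bw2]]].
  destruct bounded_solutions as [Bp [Bq [Bdp Bdq]]].
  assert (Bih : ev_bounded s (fun x => / h x)) by (apply (ev_bounded_inv s h K); auto).
  (* every term of E - E_model carries one of the vanishing differences *)
  apply tends0_ext with (fun x =>
      (h x - K) * (p x ^ 2 + q x ^ 2)
      + K * ((p x - v1 x) * (p x + v1 x) + (q x - v2 x) * (q x + v2 x))
      + / h x * ((dp x - w1 x) * (dp x + w1 x) + (dq x - w2 x) * (dq x + w2 x))
      - (h x - K) * ((w1 x ^ 2 + w2 x ^ 2) * (/ h x * / K))).
  { intros x. rewrite <- (energy_trig a1 b1 a2 b2 K x K_pos).
    unfold energy. fold v1 v2 w1 w2. pose proof (h_pos x). field. lra. }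
  repeat apply tends0_plus || apply tends0_minus.
  - apply tends0_mult; auto. apply ev_bounded_plus; apply ev_bounded_sq; auto.
  - apply tends0_mult_l; [apply ev_bounded_const|].
    apply tends0_plus; apply tends0_mult; auto; apply ev_bounded_plus; auto.
  - apply tends0_mult_l; auto.
    apply tends0_plus; apply tends0_mult; auto; apply ev_bounded_plus; auto.
  - apply tends0_opp, tends0_mult; auto.
    apply ev_bounded_mult; [apply ev_bounded_plus; apply ev_bounded_sq; auto|].
    apply ev_bounded_mult; auto. apply ev_bounded_const.
Qed.

Lemma wronskian_limit :
  tends0 s (fun x => wronskian p q dp dq x - K * (a1 * b2 - a2 * b1)).
Proof.
  destruct bounded_models as [Bv1 [Bv2 _]].
  destruct bounded_solutions as [_ [_ [Bdp Bdq]]].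
  apply tends0_ext with (fun x => (p x - v1 x) * dq x + v1 x * (dq x - w2 x)
                                - ((q x - v2 x) * dp x + v2 x * (dp x - w1 x))).
  { intros x. rewrite <- (wronskian_trig a1 b1 a2 b2 K x).
    unfold wronskian. fold v1 v2 w1 w2. ring. }
  apply tends0_minus; apply tends0_plus;
    (apply tends0_mult; now auto) || (apply tends0_mult_l; now auto).
Qed.

End EndLimits.

(* Abel's identity: the Wronskian of two solutions is constant, since its
   derivative p q'' - q p'' vanishes wherever k2 is continuous. *)
Lemma wronskian_const (k2 p q dp dq : R -> R) :
  piecewise_continuous k2 ->
  (forall x, derivable_pt_lim p x (dp x)) -> (forall x, continuity_pt dp x) ->
  (forall x, continuity_pt k2 x -> derivable_pt_lim dp x (- (k2 x * p x))) ->
  (forall x, derivable_pt_lim q x (dq x)) -> (forall x, continuity_pt dq x) ->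
  (forall x, continuity_pt k2 x -> derivable_pt_lim dq x (- (k2 x * q x))) ->
  forall x y, wronskian p q dp dq x = wronskian p q dp dq y.
Proof.
  intros [_ Hpw] Hp Hdpc Hdp Hq Hdqc Hdq.
  set (W := wronskian p q dp dq).
  assert (Hc : forall t, continuity_pt W t).
  { intros t. unfold W, wronskian.
    apply continuity_pt_minus; apply continuity_pt_mult; auto;
      apply derivable_continuous_pt;
      [exists (dp t); apply Hp | exists (dq t); apply Hq]. }
  assert (Hd : forall t, continuity_pt k2 t -> derivable_pt_lim W t 0).
  { intros t Ht. unfold W, wronskian.
    replace 0 with ((dp t * dq t + p t * - (k2 t * q t))
                    - (dq t * dp t + q t * - (k2 t * p t))) by ring.
    apply derivable_pt_lim_minus; apply derivable_pt_lim_mult; auto. }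
  assert (Hle : forall a b, a <= b -> W a = W b).
  { intros a b Hab. destruct (Hpw a b) as [D HD].
    assert (Hlip : Rabs (W b - W a) <= 0 * (b - a)).
    { apply (lipschitz_of_deriv_bound W (fun _ => 0) D); auto.
      intros t Ht HtD. rewrite Rabs_R0.
      split; [apply Hd, HD; auto; lra | lra]. }
    rewrite Rmult_0_l in Hlip. apply Rabs_le_between in Hlip. lra. }
  intros x y. destruct (Rle_dec x y); [apply Hle | symmetry; apply Hle]; lra.
Qed.

(* The two quantities in terms of which E^2 - 4 W^2 is a sum of squares:
   X = h |u|^2 - |u'|^2 / h and Y = (|u|^2)' = 2 Re (conj u * u'). *)
Definition mismatch (h p q dp dq : R -> R) (x : R) : R :=
  h x * (p x ^ 2 + q x ^ 2) - (dp x ^ 2 + dq x ^ 2) / h x.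
Definition norm2_deriv (p q dp dq : R -> R) (x : R) : R :=
  2 * (p x * dp x + q x * dq x).

Lemma energy_wronskian_identity (h p q dp dq : R -> R) t : 0 < h t ->
  energy h p q dp dq t ^ 2 - (2 * wronskian p q dp dq t) ^ 2 =
  mismatch h p q dp dq t ^ 2 + norm2_deriv p q dp dq t ^ 2.
Proof. intros Hh. unfold energy, wronskian, mismatch, norm2_deriv. field. lra. Qed.

Lemma energy_nonneg (h p q dp dq : R -> R) t : 0 < h t -> 0 <= energy h p q dp dq t.
Proof.
  intros Hh. unfold energy.
  assert (0 <= (dp t ^ 2 + dq t ^ 2) / h t).
  { apply Rmult_le_pos; [nra | left; apply Rinv_0_lt_compat; auto]. }
  nra.
Qed.

Definition energy_deriv (k2 h dh p q dp dq : R -> R) (t : R) : R :=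
  dh t / h t * mismatch h p q dp dq t
  + (h t ^ 2 - k2 t) / h t * norm2_deriv p q dp dq t.

Lemma energy_has_deriv (k2 h dh p q dp dq : R -> R) t :
  0 < h t -> derivable_pt_lim h t (dh t) ->
  derivable_pt_lim p t (dp t) -> derivable_pt_lim q t (dq t) ->
  derivable_pt_lim dp t (- (k2 t * p t)) -> derivable_pt_lim dq t (- (k2 t * q t)) ->
  derivable_pt_lim (energy h p q dp dq) t (energy_deriv k2 h dh p q dp dq t).
Proof.
  intros Hh Hdh Hp Hq Hdp Hdq. unfold energy.
  apply derivable_pt_lim_eq with
    (dh t * (p t ^ 2 + q t ^ 2) + h t * (2 * p t * dp t + 2 * q t * dq t)
     + ((2 * dp t * - (k2 t * p t) + 2 * dq t * - (k2 t * q t)) * h t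
        - dh t * (dp t ^ 2 + dq t ^ 2)) / (h t)²).
  - apply derivable_pt_lim_plus.
    + apply (derivable_pt_lim_mult h (fun x => p x ^ 2 + q x ^ 2)); auto.
      apply derivable_pt_lim_plus; apply derivable_pt_lim_sq; auto.
    + apply (derivable_pt_lim_div (fun x => dp x ^ 2 + dq x ^ 2) h); auto; [|lra].
      apply derivable_pt_lim_plus; apply derivable_pt_lim_sq; auto.
  - unfold energy_deriv, mismatch, norm2_deriv, Rsqr. field. lra.
Qed.

(* Psi c d is a primitive of 1 / sqrt (z^2 - c^2 + d); the regularisation
   d > 0 keeps it smooth where the energy reaches the value c = 2 W. *)
Definition Psi (c d z : R) : R := ln (z + sqrt (z ^ 2 - c ^ 2 + d)).

Lemma Psi_deriv c d z : 0 <= z -> 0 < z ^ 2 - c ^ 2 + d ->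
  derivable_pt_lim (Psi c d) z (/ sqrt (z ^ 2 - c ^ 2 + d)).
Proof.
  intros Hz HS. set (S := z ^ 2 - c ^ 2 + d).
  assert (HsS : 0 < sqrt S) by (apply sqrt_lt_R0; auto).
  assert (Hin : derivable_pt_lim (fun y => y + sqrt (y ^ 2 - c ^ 2 + d)) z
                  (1 + 2 * z * 1 * / (2 * sqrt S))).
  { apply derivable_pt_lim_plus; [apply derivable_pt_lim_id|].
    apply derivable_pt_lim_eq with (/ (2 * sqrt S) * ((2 * z * 1 - 0) + 0)); [|ring].
    apply (derivable_pt_lim_comp (fun y => y ^ 2 - c ^ 2 + d) sqrt).
    - apply derivable_pt_lim_plus; [apply derivable_pt_lim_minus|];
        [apply derivable_pt_lim_sq, derivable_pt_lim_id | ..];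
        apply derivable_pt_lim_const.
    - apply derivable_pt_lim_sqrt. auto. }
  unfold Psi.
  apply derivable_pt_lim_eq with (/ (z + sqrt S) * (1 + 2 * z * 1 * / (2 * sqrt S))).
  - apply (derivable_pt_lim_comp (fun y => y + sqrt (y ^ 2 - c ^ 2 + d)) ln); auto.
    apply derivable_pt_lim_ln. fold S. lra.
  - field. lra.
Qed.

Lemma Psi_cont c d z : 0 <= z -> 0 < z ^ 2 - c ^ 2 + d -> continuity_pt (Psi c d) z.
Proof. intros. apply derivable_continuous_pt. eexists. apply Psi_deriv; auto. Qed.

Lemma ln_cont z : 0 < z -> continuity_pt ln z.
Proof. intros. apply derivable_continuous_pt. eexists. apply derivable_pt_lim_ln; auto. Qed.

Lemma Rabs_lin_comb_le a b X Y :
  Rabs (a * X + b * Y) <= (Rabs a + Rabs b) * sqrt (X ^ 2 + Y ^ 2).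
Proof.
  assert (HX : Rabs X <= sqrt (X ^ 2 + Y ^ 2)).
  { rewrite <- sqrt_Rsqr_abs. apply sqrt_le_1_alt. unfold Rsqr. nra. }
  assert (HY : Rabs Y <= sqrt (X ^ 2 + Y ^ 2)).
  { rewrite <- sqrt_Rsqr_abs. apply sqrt_le_1_alt. unfold Rsqr. nra. }
  apply Rle_trans with (1 := Rabs_triang _ _). rewrite !Rabs_mult.
  pose proof (Rabs_pos a). pose proof (Rabs_pos b).
  rewrite Rmult_plus_distr_r.
  apply Rplus_le_compat; apply Rmult_le_compat_l; auto.
Qed.

(* The radicand of Psi along the energy is X^2 + Y^2 + d > 0. *)
Lemma energy_radicand_pos (h p q dp dq : R -> R) W0 d t :
  0 < h t -> wronskian p q dp dq t = W0 -> 0 < d ->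
  0 < energy h p q dp dq t ^ 2 - (2 * W0) ^ 2 + d.
Proof.
  intros Hh HW Hd. rewrite <- HW, energy_wronskian_identity by auto.
  pose proof (pow2_ge_0 (mismatch h p q dp dq t)).
  pose proof (pow2_ge_0 (norm2_deriv p q dp dq t)). lra.
Qed.

Lemma energy_rate_bound (k2 h dh p q dp dq : R -> R) W0 d t :
  0 < h t -> wronskian p q dp dq t = W0 -> 0 < d ->
  Rabs (energy_deriv k2 h dh p q dp dq t
        / sqrt (energy h p q dp dq t ^ 2 - (2 * W0) ^ 2 + d))
  <= Rabs (dh t / h t) + Rabs (k2 t - h t ^ 2) / h t.
Proof.
  intros Hh HW Hd.
  set (X := mismatch h p q dp dq t). set (Y := norm2_deriv p q dp dq t).
  set (S := energy h p q dp dq t ^ 2 - (2 * W0) ^ 2 + d).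
  assert (HS : X ^ 2 + Y ^ 2 < S).
  { unfold S, X, Y. rewrite <- HW, energy_wronskian_identity by auto. lra. }
  assert (HsS : 0 < sqrt S) by (apply sqrt_lt_R0; pose proof (pow2_ge_0 X);
                                  pose proof (pow2_ge_0 Y); lra).
  assert (Hsq : sqrt (X ^ 2 + Y ^ 2) <= sqrt S) by (apply sqrt_le_1_alt; lra).
  assert (Hb : Rabs ((h t ^ 2 - k2 t) / h t) = Rabs (k2 t - h t ^ 2) / h t).
  { unfold Rdiv. rewrite Rabs_mult, Rabs_inv, (Rabs_pos_eq (h t)) by lra.
    rewrite <- Rabs_Ropp. do 2 f_equal. ring. }
  rewrite <- Hb. unfold Rdiv at 1. rewrite Rabs_mult, Rabs_inv, (Rabs_pos_eq (sqrt S)) by lra.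
  apply Rmult_le_reg_r with (sqrt S); auto.
  rewrite Rmult_assoc, Rinv_l, Rmult_1_r by lra.
  apply Rle_trans with (1 := Rabs_lin_comb_le _ _ X Y).
  apply Rmult_le_compat_l; auto.
  pose proof (Rabs_pos (dh t / h t)). pose proof (Rabs_pos ((h t ^ 2 - k2 t) / h t)). lra.
Qed.

(* The potential P = Psi (2 W0) d E + sg ln h, where sg = +-1 is the sign of
   h'.  Along solutions its derivative is at least - |k2 - h^2| / h. *)
Definition potential (h p q dp dq : R -> R) (W0 d sg x : R) : R :=
  Psi (2 * W0) d (energy h p q dp dq x) + sg * ln (h x).

Definition potential_deriv (k2 h dh p q dp dq : R -> R) (W0 d sg t : R) : R :=
  energy_deriv k2 h dh p q dp dq t
    / sqrt (energy h p q dp dq t ^ 2 - (2 * W0) ^ 2 + d)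
  + sg * (dh t / h t).

Lemma potential_has_deriv (k2 h dh p q dp dq : R -> R) W0 d sg t :
  0 < h t -> derivable_pt_lim h t (dh t) ->
  derivable_pt_lim p t (dp t) -> derivable_pt_lim q t (dq t) ->
  derivable_pt_lim dp t (- (k2 t * p t)) -> derivable_pt_lim dq t (- (k2 t * q t)) ->
  wronskian p q dp dq t = W0 -> 0 < d ->
  derivable_pt_lim (potential h p q dp dq W0 d sg) t
    (potential_deriv k2 h dh p q dp dq W0 d sg t).
Proof.
  intros Hh Hdh Hp Hq Hdp Hdq HW Hd. unfold potential, potential_deriv.
  apply derivable_pt_lim_plus.
  - apply derivable_pt_lim_eq with
      (/ sqrt (energy h p q dp dq t ^ 2 - (2 * W0) ^ 2 + d)
       * energy_deriv k2 h dh p q dp dq t); [|unfold Rdiv; ring].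
    apply (derivable_pt_lim_comp (energy h p q dp dq) (Psi (2 * W0) d)).
    + apply energy_has_deriv; auto.
    + apply Psi_deriv; [apply energy_nonneg | apply energy_radicand_pos]; auto.
  - apply derivable_pt_lim_eq with (sg * (/ h t * dh t)); [|unfold Rdiv; ring].
    apply derivable_pt_lim_scal.
    apply (derivable_pt_lim_comp h ln); auto. apply derivable_pt_lim_ln; auto.
Qed.

(* The ln h term exactly compensates the h'/h part of the energy rate. *)
Lemma potential_deriv_lower_bound (k2 h dh p q dp dq : R -> R) W0 d sg t :
  0 < h t -> wronskian p q dp dq t = W0 -> 0 < d -> sg * dh t = Rabs (dh t) ->
  - potential_deriv k2 h dh p q dp dq W0 d sg t <= Rabs (k2 t - h t ^ 2) / h t.
Proof.
  intros Hh HW Hd Hsg.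
  assert (Hrate := energy_rate_bound k2 h dh p q dp dq W0 d t Hh HW Hd).
  assert (Ha : Rabs (dh t / h t) = sg * (dh t / h t)).
  { unfold Rdiv. rewrite Rabs_mult, Rabs_inv, (Rabs_pos_eq (h t)), <- Hsg by lra. ring. }
  rewrite Ha in Hrate. apply Rabs_le_between in Hrate.
  unfold potential_deriv. lra.
Qed.

Lemma potential_cont (h p q dp dq : R -> R) W0 d sg t :
  0 < h t -> continuity_pt h t -> continuity_pt p t -> continuity_pt q t ->
  continuity_pt dp t -> continuity_pt dq t ->
  wronskian p q dp dq t = W0 -> 0 < d ->
  continuity_pt (potential h p q dp dq W0 d sg) t.
Proof.
  intros Hh Hhc Hp Hq Hdp Hdq HW Hd.
  assert (Hsq : forall f, continuity_pt f t -> continuity_pt (fun x => f x ^ 2) t).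
  { intros f Hf. apply (continuity_pt_comp f (fun y => y ^ 2)); auto.
    apply derivable_continuous_pt. eexists.
    apply (derivable_pt_lim_sq (fun y => y)), derivable_pt_lim_id. }
  assert (HE : continuity_pt (energy h p q dp dq) t).
  { unfold energy.
    apply (continuity_pt_plus (fun x => h x * (p x ^ 2 + q x ^ 2))
             (fun x => (dp x ^ 2 + dq x ^ 2) / h x)).
    - apply (continuity_pt_mult h (fun x => p x ^ 2 + q x ^ 2)); auto.
      apply (continuity_pt_plus (fun x => p x ^ 2) (fun x => q x ^ 2)); auto.
    - apply (continuity_pt_div (fun x => dp x ^ 2 + dq x ^ 2) h); [| |lra]; auto.
      apply (continuity_pt_plus (fun x => dp x ^ 2) (fun x => dq x ^ 2)); auto. }
  unfold potential.
  apply (continuity_pt_plus (fun x => Psi (2 * W0) d (energy h p q dp dq x))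
           (fun x => sg * ln (h x))).
  - apply (continuity_pt_comp (energy h p q dp dq) (Psi (2 * W0) d)); auto.
    apply Psi_cont; [apply energy_nonneg | apply energy_radicand_pos]; auto.
  - apply (continuity_pt_scal (fun x => ln (h x))).
    apply (continuity_pt_comp h ln); auto. apply ln_cont; auto.
Qed.

Lemma potential_tends s (h p q dp dq : R -> R) W0 d sg E_end k :
  0 < k -> 0 <= E_end -> 0 < E_end ^ 2 - (2 * W0) ^ 2 + d ->
  tends0 s (fun x => energy h p q dp dq x - E_end) -> tends0 s (fun x => h x - k) ->
  tends0 s (fun x => potential h p q dp dq W0 d sg x - (Psi (2 * W0) d E_end + sg * ln k)).
Proof.
  intros Hk HE HS HElim Hhlim.
  apply tends0_ext with (fun x => (Psi (2 * W0) d (energy h p q dp dq x) - Psi (2 * W0) d E_end)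
                                + sg * (ln (h x) - ln k)).
  { intros. unfold potential. ring. }
  apply tends0_plus.
  - apply (tends0_comp s (energy h p q dp dq)); auto. apply Psi_cont; auto.
  - apply tends0_mult_l; [apply ev_bounded_const|].
    apply (tends0_comp s h); auto. apply ln_cont; auto.
Qed.

Lemma drop_le_improper_integral (F g : R -> R) Fm Fp I :
  (forall a b v, a <= b -> has_integral g a b v -> F a - F b <= v) ->
  tends0 (-1) (fun x => F x - Fm) -> tends0 1 (fun x => F x - Fp) ->
  improper_integral_R g I -> Fm - Fp <= I.
Proof.
  intros Hdrop Hm Hp [_ HI]. apply Rnot_lt_le. intros Hlt.
  set (eps := (Fm - Fp - I) / 3). assert (Heps : 0 < eps) by (unfold eps; lra).
  destruct (HI eps Heps) as [M HM].
  destruct (Hm eps Heps) as [Ma HMa]. destruct (Hp eps Heps) as [Mb HMb].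
  set (a := - Rmax (Rmax Ma M) 0). set (b := Rmax (Rmax Mb M) 0).
  pose proof (Rmax_l (Rmax Ma M) 0). pose proof (Rmax_r (Rmax Ma M) 0).
  pose proof (Rmax_l Ma M). pose proof (Rmax_r Ma M).
  pose proof (Rmax_l (Rmax Mb M) 0). pose proof (Rmax_r (Rmax Mb M) 0).
  pose proof (Rmax_l Mb M). pose proof (Rmax_r Mb M).
  destruct (HM a b ltac:(unfold a; lra) ltac:(unfold b; lra)) as [v [Hv HvI]].
  assert (Hab := Hdrop a b v ltac:(unfold a, b; lra) Hv).
  assert (Ha := HMa a ltac:(unfold a; lra)). assert (Hb := HMb b ltac:(unfold b; lra)).
  apply Rabs_def2 in HvI. apply Rabs_def2 in Ha. apply Rabs_def2 in Hb.
  unfold eps in *. lra.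
Qed.

Lemma monotone_deriv_sign (h dh : R -> R) :
  monotone h -> (forall x, derivable_pt_lim h x (dh x)) ->
  exists sg, (sg = 1 \/ sg = -1) /\ forall x, sg * dh x = Rabs (dh x).
Proof.
  intros [Hm|Hm] Hd.
  - exists 1. split; [left; auto|]. intros x.
    pose (pr := fun y => exist (fun l => derivable_pt_abs h y l) (dh y) (Hd y)).
    assert (H := nonneg_derivative_0 h pr Hm x).
    change (derive_pt h x (pr x)) with (dh x) in H.
    rewrite Rabs_pos_eq; lra.
  - exists (-1). split; [right; auto|]. intros x.
    pose (pr := fun y => exist (fun l => derivable_pt_abs (fun z => - h z) y l) (- dh y)
                          (derivable_pt_lim_opp h y (dh y) (Hd y))).
    assert (Hm' : increasing (fun z => - h z)) by (intros a b Hab; specialize (Hm a b Hab); lra).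
    assert (H := nonneg_derivative_0 _ pr Hm' x).
    change (derive_pt (fun z => - h z) x (pr x)) with (- dh x) in H.
    rewrite Rabs_left1; lra.
Qed.

Lemma le_of_le_plus_sqrt a b C :
  0 < C -> (forall d, 0 < d -> a <= b + C * sqrt d) -> a <= b.
Proof.
  intros HC H. apply Rnot_lt_le. intros Hlt.
  set (e := (a - b) / (2 * C)). assert (He : 0 < e) by (unfold e; apply Rdiv_lt_0_compat; lra).
  specialize (H (e ^ 2) ltac:(nra)).
  rewrite sqrt_pow2 in H by lra. unfold e in H.
  replace (C * ((a - b) / (2 * C))) with ((a - b) / 2) in H by (field; lra). lra.
Qed.

Lemma le_exp_mul_of_ln_sub_le A B L :
  0 < A -> 0 < B -> ln A - ln B <= L -> A <= exp L * B.
Proof.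
  intros HA HB H. apply Rnot_lt_le. intros Hlt.
  assert (Hln : ln (exp L * B) < ln A) by (apply ln_increasing; auto;
                                            pose proof (exp_pos L); nra).
  rewrite ln_mult, ln_exp in Hln by (auto; apply exp_pos). lra.
Qed.

Lemma sech_exp L : sech L = 2 * exp L / (exp L ^ 2 + 1).
Proof.
  pose proof (exp_pos L). unfold sech, cosh. rewrite exp_Ropp. field. nra.
Qed.

(* The elementary inequality behind the sech^2 form of the bound. *)
Lemma sech_sq_ineq t x : 0 <= t -> 0 < x -> 1 + t <= x ^ 2 * (1 - t) ->
  (2 * x / (x ^ 2 + 1)) ^ 2 <= 1 - t ^ 2.
Proof.
  intros Ht Hx H.
  assert (Hts : 0 <= t * (x ^ 2 + 1) <= x ^ 2 - 1) by nra.
  assert (Hsq : (t * (x ^ 2 + 1)) ^ 2 <= (x ^ 2 - 1) ^ 2) by (apply pow_incr; lra).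
  assert (Hpos : 0 < (x ^ 2 + 1) ^ 2) by nra.
  replace ((2 * x / (x ^ 2 + 1)) ^ 2) with (4 * x ^ 2 / (x ^ 2 + 1) ^ 2) by (field; nra).
  apply Rmult_le_reg_r with ((x ^ 2 + 1) ^ 2); auto.
  unfold Rdiv. rewrite Rmult_assoc, Rinv_l, Rmult_1_r by lra. nra.
Qed.

(* Write R = |r|^2, N = |tau|^2 and use the conservation of
   the Wronskian kp N = km (1 - R).  The energy tends to 2 km (1 + R) at -oo
   and to 2 kp N = 2 W at +oo; if the regularised drop of Psi between these
   values is at most L for every d > 0, then T = (kp / km) N >= sech^2 (L/2).
   Letting d -> 0 gives (1 + sqrt R) <= e^L (1 - sqrt R). *)
Lemma transmission_from_energy_drop km kp N R L :
  0 < km -> 0 < kp -> 0 <= N -> 0 <= R -> kp * N = km * (1 - R) ->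
  (forall d, 0 < d -> Psi (2 * (kp * N)) d (2 * km * (1 + R))
                      - Psi (2 * (kp * N)) d (2 * (kp * N)) <= L) ->
  kp / km * N >= sech (/ 2 * L) ^ 2.
Proof.
  intros Hkm Hkp HN HR HW Hdrop.
  set (t := sqrt R). assert (Ht : 0 <= t) by apply sqrt_pos.
  assert (Htt : t ^ 2 = R) by (unfold t; rewrite <- Rsqr_pow2; apply Rsqr_sqrt; auto).
  set (x := exp (/ 2 * L)). assert (Hx : 0 < x) by apply exp_pos.
  assert (Hx2 : x ^ 2 = exp L).
  { unfold x. replace (exp L) with (exp (/ 2 * L + / 2 * L)) by (f_equal; field).
    rewrite exp_plus. ring. }
  set (c := 2 * (kp * N)).
  assert (Hc : c = 2 * km * (1 - t) * (1 + t)) by (unfold c; rewrite HW, <- Htt; ring).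
  assert (Hend : 2 * km * (1 + t) ^ 2 <= x ^ 2 * c).
  { apply (le_of_le_plus_sqrt _ _ (x ^ 2)); [nra|]. intros d Hd.
    specialize (Hdrop d Hd). fold c in Hdrop. unfold Psi in Hdrop.
    replace (c ^ 2 - c ^ 2 + d) with d in Hdrop by ring.
    assert (Hrad : 4 * km * t <= sqrt ((2 * km * (1 + R)) ^ 2 - c ^ 2 + d)).
    { rewrite <- (sqrt_pow2 (4 * km * t)) by nra. apply sqrt_le_1_alt.
      rewrite Hc, <- Htt. nra. }
    assert (Hsd : 0 < sqrt d) by (apply sqrt_lt_R0; auto).
    assert (Hc0 : 0 <= c) by (unfold c; nra).
    apply le_exp_mul_of_ln_sub_le in Hdrop; [|nra | nra].
    rewrite <- Hx2 in Hdrop. rewrite <- Htt in Hrad, Hdrop. nra. }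
  assert (Hkey : 1 + t <= x ^ 2 * (1 - t)).
  { rewrite Hc in Hend. apply Rmult_le_reg_l with (2 * km * (1 + t)); [nra|]. nra. }
  replace (kp / km * N) with (1 - t ^ 2) by (rewrite Htt; field_simplify_eq; [nra | lra]).
  rewrite sech_exp. fold x. apply Rle_ge, sech_sq_ineq; auto.
Qed.

Section Transmission.
(* p, q are the real and imaginary parts of the scattering solution u, with
   derivatives dp, dq; h is the comparison function, with derivative dh. *)
Variables (k2 h dh p q dp dq : R -> R) (km kp r1 r2 t1 t2 I : R).
Hypothesis k2_pw : piecewise_continuous k2.
Hypotheses (km_pos : 0 < km) (kp_pos : 0 < kp).
Hypotheses (k2_minf : lim_minf k2 (km ^ 2)) (k2_pinf : lim_pinf k2 (kp ^ 2)).
Hypotheses (p_deriv : forall x, derivable_pt_lim p x (dp x))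
  (dp_cont : forall x, continuity_pt dp x)
  (dp_deriv : forall x, continuity_pt k2 x -> derivable_pt_lim dp x (- (k2 x * p x))).
Hypotheses (q_deriv : forall x, derivable_pt_lim q x (dq x))
  (dq_cont : forall x, continuity_pt dq x)
  (dq_deriv : forall x, continuity_pt k2 x -> derivable_pt_lim dq x (- (k2 x * q x))).
(* u = e^(i km x) + r e^(-i km x) + o(1) at -oo, u = tau e^(i kp x) + o(1) at +oo,
   with r = r1 + i r2 and tau = t1 + i t2. *)
Hypotheses (p_minf : tends0 (-1) (fun x => p x - trig (1 + r1) r2 km x))
  (q_minf : tends0 (-1) (fun x => q x - trig r2 (1 - r1) km x))
  (p_pinf : tends0 1 (fun x => p x - trig t1 (- t2) kp x))
  (q_pinf : tends0 1 (fun x => q x - trig t2 t1 kp x)).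
Hypotheses (h_deriv : forall x, derivable_pt_lim h x (dh x))
  (h_pos : forall x, 0 < h x) (h_mono : monotone h)
  (h_minf : lim_minf h km) (h_pinf : lim_pinf h kp).
Hypothesis I_def : improper_integral_R (fun x => Rabs (k2 x - h x ^ 2) / h x) I.

Let W0 := wronskian p q dp dq 0.
Let E_minf := 2 * km * (1 + (r1 ^ 2 + r2 ^ 2)).
Let E_pinf := 2 * (kp * (t1 ^ 2 + t2 ^ 2)).

Let wronskian_W0 x : wronskian p q dp dq x = W0.
Proof. apply (wronskian_const k2); auto. Qed.

Let limits_at s K a1 b1 a2 b2 :
  s = 1 \/ s = -1 -> 0 < K ->
  tends0 s (fun x => k2 x - K ^ 2) -> tends0 s (fun x => h x - K) ->
  tends0 s (fun x => p x - trig a1 b1 K x) -> tends0 s (fun x => q x - trig a2 b2 K x) ->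
  tends0 s (fun x => energy h p q dp dq x - K * (a1 ^ 2 + b1 ^ 2 + a2 ^ 2 + b2 ^ 2)) /\
  tends0 s (fun x => W0 - K * (a1 * b2 - a2 * b1)).
Proof.
  intros Hs HK Hk2 Hh Hp Hq.
  assert (Hdp := deriv_approaches_model s k2 p dp K a1 b1
                  Hs k2_pw p_deriv dp_cont dp_deriv Hk2 Hp).
  assert (Hdq := deriv_approaches_model s k2 q dq K a2 b2
                  Hs k2_pw q_deriv dq_cont dq_deriv Hk2 Hq).
  split.
  - apply energy_limit; auto.
  - apply (tends0_ext s (fun x => wronskian p q dp dq x - K * (a1 * b2 - a2 * b1))).
    + intros. rewrite wronskian_W0. reflexivity.
    + apply wronskian_limit; auto.
Qed.

Let ends_minf :
  tends0 (-1) (fun x => energy h p q dp dq x - E_minf) /\ W0 = km * (1 - (r1 ^ 2 + r2 ^ 2)).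
Proof.
  destruct (limits_at (-1) km (1 + r1) r2 r2 (1 - r1)) as [HE HW];
    auto using lim_minf_tends0.
  split.
  - apply tends0_ext with (2 := HE). intros. unfold E_minf. ring.
  - transitivity (km * ((1 + r1) * (1 - r1) - r2 * r2)); [|ring].
    apply (tends0_const_eq (-1)); auto.
Qed.

Let ends_pinf :
  tends0 1 (fun x => energy h p q dp dq x - E_pinf) /\ W0 = kp * (t1 ^ 2 + t2 ^ 2).
Proof.
  destruct (limits_at 1 kp t1 (- t2) t2 t1) as [HE HW];
    auto using lim_pinf_tends0.
  split.
  - apply tends0_ext with (2 := HE). intros. unfold E_pinf. ring.
  - transitivity (kp * (t1 * t1 - t2 * - t2)); [|ring].
    apply (tends0_const_eq 1); auto.
Qed.

Let potential_drop_le_integral d sg a b v :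
  0 < d -> (forall x, sg * dh x = Rabs (dh x)) -> a <= b ->
  has_integral (fun x => Rabs (k2 x - h x ^ 2) / h x) a b v ->
  potential h p q dp dq W0 d sg a - potential h p q dp dq W0 d sg b <= v.
Proof.
  intros Hd Hsgd Hab [pr <-].
  destruct k2_pw as [_ Hpw]. destruct (Hpw a b) as [D HD].
  set (F := potential h p q dp dq W0 d sg).
  replace (F a - F b) with (- F b - - F a) by ring.
  apply (increment_le_RiemannInt (fun x => - F x)
           (fun t => - potential_deriv k2 h dh p q dp dq W0 d sg t) _ D a b pr Hab).
  - intros t _. apply continuity_pt_opp, potential_cont; auto.
    + apply derivable_continuous_pt. exists (dh t). apply h_deriv.
    + apply derivable_continuous_pt. exists (dp t). apply p_deriv.
    + apply derivable_continuous_pt. exists (dq t). apply q_deriv.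
  - intros t Ht HtD. assert (Hk := HD t ltac:(lra) HtD). split.
    + apply derivable_pt_lim_opp, potential_has_deriv; auto.
    + apply potential_deriv_lower_bound; auto.
Qed.

(* The core estimate: comparing the end values of the potential, whose
   ln h parts differ by sg ln (kp / km) <= |ln (kp / km)|. *)
Let energy_drop d : 0 < d ->
  Psi (2 * W0) d E_minf - Psi (2 * W0) d E_pinf <= Rabs (ln (kp / km)) + I.
Proof.
  intros Hd.
  destruct ends_minf as [HEm HWm]. destruct ends_pinf as [HEp HWp].
  destruct (monotone_deriv_sign h dh h_mono h_deriv) as [sg [Hsg Hsgd]].
  assert (HradM : 0 < E_minf ^ 2 - (2 * W0) ^ 2 + d) by (rewrite HWm; unfold E_minf; nra).
  assert (HradP : 0 < E_pinf ^ 2 - (2 * W0) ^ 2 + d) by (rewrite HWp; unfold E_pinf; nra).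
  assert (Hlim := drop_le_improper_integral (potential h p q dp dq W0 d sg) _ _ _ I
     (fun a b v => potential_drop_le_integral d sg a b v Hd Hsgd)
     (potential_tends (-1) h p q dp dq W0 d sg E_minf km km_pos
        ltac:(unfold E_minf; nra) HradM HEm (lim_minf_tends0 _ _ h_minf))
     (potential_tends 1 h p q dp dq W0 d sg E_pinf kp kp_pos
        ltac:(unfold E_pinf; nra) HradP HEp (lim_pinf_tends0 _ _ h_pinf)) I_def).
  assert (Hln : ln (kp / km) = ln kp - ln km).
  { unfold Rdiv. rewrite ln_mult, ln_Rinv; auto. apply Rinv_0_lt_compat; auto. }
  assert (sg * (ln kp - ln km) <= Rabs (ln (kp / km))).
  { rewrite Hln. destruct Hsg as [-> | ->].
    - rewrite Rmult_1_l. apply RRle_abs.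
    - rewrite <- Rabs_Ropp. replace (-1 * (ln kp - ln km)) with (- (ln kp - ln km)) by ring.
      apply RRle_abs. }
  lra.
Qed.

Lemma transmission_lower_bound :
  kp / km * (t1 ^ 2 + t2 ^ 2) >= sech (/ 2 * Rabs (ln (kp / km)) + / 2 * I) ^ 2.
Proof.
  destruct ends_minf as [_ HWm]. destruct ends_pinf as [_ HWp].
  replace (/ 2 * Rabs (ln (kp / km)) + / 2 * I) with (/ 2 * (Rabs (ln (kp / km)) + I))
    by ring.
  apply (transmission_from_energy_drop km kp _ (r1 ^ 2 + r2 ^ 2)); auto; try nra.
  intros d Hd. pose proof (energy_drop d Hd) as Hdrop.
  unfold E_minf, E_pinf in Hdrop. rewrite <- HWp in Hdrop |- *. exact Hdrop.
Qed.

End Transmission.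

Theorem mainTheorem6
  (k2 : R -> R) (km kp : R) (u : R -> Cx) (r tau : Cx) (h : R -> R) (I : R) :
  piecewise_continuous k2 ->
  0 < km -> 0 < kp ->
  lim_minf k2 (km ^ 2) -> lim_pinf k2 (kp ^ 2) ->
  integrable_near_minf (fun x => k2 x - km ^ 2) ->
  integrable_near_pinf (fun x => k2 x - kp ^ 2) ->
  is_solution k2 (fun x => fst (u x)) ->
  is_solution k2 (fun x => snd (u x)) ->
  Clim0_minf (fun x =>
    let v := Cadd (Cexpi (km * x)) (Cmul r (Cexpi (- (km * x)))) in
    (fst (u x) - fst v, snd (u x) - snd v)) ->
  Clim0_pinf (fun x =>
    let v := Cmul tau (Cexpi (kp * x)) in
    (fst (u x) - fst v, snd (u x) - snd v)) ->
  is_C1 h -> (forall x, 0 < h x) -> monotone h ->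
  lim_minf h km -> lim_pinf h kp ->
  improper_integral_R (fun x => Rabs (k2 x - h x ^ 2) / h x) I ->
  (kp / km) * Cnorm2 tau >=
    (sech (/ 2 * Rabs (ln (kp / km)) + / 2 * I)) ^ 2.
Proof.
  intros Hpw Hkm Hkp Hk2m Hk2p _ _ [dp [Hp [Hdpc Hdp]]] [dq [Hq [Hdqc Hdq]]]
    [Hre_m Him_m] [Hre_p Him_p] [dh [Hdh _]] Hh Hmono Hhm Hhp HI.
  destruct r as [r1 r2], tau as [t1 t2].
  change (Cnorm2 (t1, t2)) with (t1 ^ 2 + t2 ^ 2).
  (* the real and imaginary parts of the asymptotic forms of u are model solutions *)
  apply (transmission_lower_bound k2 h dh (fun x => fst (u x)) (fun x => snd (u x))
           dp dq km kp r1 r2 t1 t2 I); auto;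
    [ apply lim_minf_tends0 in Hre_m | apply lim_minf_tends0 in Him_m
    | apply lim_pinf_tends0 in Hre_p | apply lim_pinf_tends0 in Him_p ];
    (eapply tends0_ext; [|eassumption]); intros x;
    unfold trig, Cadd, Cmul, Cexpi; simpl; rewrite ?cos_neg, ?sin_neg; ring.
Qed.
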